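(* For all ordered graphs $G_1$ and $G_2$, $$r_o(G_1,G_2)\;\ge\;\frac14\min\Big\{\Delta^-(G_1)\big(\Delta^-(G_1)-1\big),\ \Delta^+(G_2)\big(\Delta^+(G_2)-1\big)\Big\}.$$
   Context: An ordered graph $G$ on $n$ vertices has vertex set $[n]=\{1,\dots,n\}$ with the natural linear order. An ordered graph $G$ on $[n]$ is contained in an ordered graph $H$ on a linearly ordered vertex set if there is an injective map $f$ from $[n]$ to $V(H)$ with $f(i)<f(j)$ whenever $i<j$ and $f(i)f(j)\in E(H)$ whenever $ij\in E(G)$; such an image is an ordered copy of $G$. For a vertex $v$ of an ordered graph, the left degree $d^-(v)$ is the number of neighbors $u$ of $v$ with $u<v$, and the right degree $d^+(v)$ is the number of neighbors $u$ with $u>v$; $\Delta^-(G)$ and $\Delta^+(G)$ denote the maxima of $d^-$ and $d^+$ over $V(G)$. The online ordered Ramsey game for $(G_1,G_2)$ is played by Builder and Painter on the vertex set $\mathbb N$ with its natural order. On each turn Builder selects a previously unselected pair of vertices (an edge) and Painter then colors it red or blue. Builder wins as soon as the colored edges contain an ordered red copy of $G_1$ or an ordered blue copy of $G_2$; Builder tries to minimize and Painter tries to maximize the number of turns. The online ordered Ramsey number $r_o(G_1,G_2)$ is the number of turns after which Builder wins when both players play optimally. *)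

From mathcomp Require Import all_boot all_order.
Set Implicit Arguments. Unset Strict Implicit. Unset Printing Implicit Defensive.

(* An ordered graph on [n] (represented by 'I_n = {0,...,n-1} with its natural
   order) is given by a symmetric irreflexive adjacency relation. *)
Definition simple_graph (n : nat) (e : rel 'I_n) : Prop :=
  symmetric e /\ irreflexive e.

Definition ldeg (n : nat) (e : rel 'I_n) (v : 'I_n) : nat :=
  #|[set u : 'I_n | (u < v) && e u v]|.
Definition rdeg (n : nat) (e : rel 'I_n) (v : 'I_n) : nat :=
  #|[set u : 'I_n | (v < u) && e v u]|.

Definition Delta_minus (n : nat) (e : rel 'I_n) : nat := \max_(v : 'I_n) ldeg e v.
Definition Delta_plus (n : nat) (e : rel 'I_n) : nat := \max_(v : 'I_n) rdeg e v.

(* A board position of the game on vertex set nat: the list of edges selected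
   so far, each edge {u,v} stored as (u, v, c) with u < v and colour c
   (true = red, false = blue). *)
Definition board := seq (nat * nat * bool).

Definition has_copy (n : nat) (e : rel 'I_n) (c : bool) (P : board) : Prop :=
  exists f : 'I_n -> nat,
    (forall i j : 'I_n, i < j -> f i < f j) /\
    (forall i j : 'I_n, i < j -> e i j -> (f i, f j, c) \in P).

Definition builder_won n1 (e1 : rel 'I_n1) n2 (e2 : rel 'I_n2) (P : board) : Prop :=
  has_copy e1 true P \/ has_copy e2 false P.

Inductive builder_wins_within n1 (e1 : rel 'I_n1) n2 (e2 : rel 'I_n2)
  : nat -> board -> Prop :=
| bw_done k P : builder_won e1 e2 P -> builder_wins_within e1 e2 k P
| bw_step k P u v :
    u < v ->
    (forall c, (u, v, c) \notin P) ->
    (forall c : bool, builder_wins_within e1 e2 k ((u, v, c) :: P)) ->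
    builder_wins_within e1 e2 k.+1 P.

From mathcomp Require Import all_boot all_order.
From mathcomp Require Import zify.

Set Implicit Arguments.
Unset Strict Implicit.
Unset Printing Implicit Defensive.

(* Painter colours a new edge (u, v) red exactly when v still has fewer than
   a - 1 red edges coming from the left, where a = Delta^-(G1).  Then no vertex
   ever has red left degree a, so there is no red copy of G1; and a blue edge
   only ever enters a vertex that already carries a - 1 red left edges, so it
   has at least a selected left edges in total.  A blue copy of G2 needs some
   vertex with b = Delta^+(G2) blue right neighbours, i.e. b distinct vertices
   each entered by at least a selected edges: Builder must have played at
   least a * b >= min {a (a - 1), b (b - 1)} turns. *)

Definition indeg (w : nat) (P : board) : nat :=
  count (fun t : nat * nat * bool => t.1.2 == w) P.

Definition red_indeg (w : nat) (P : board) : nat :=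
  count (fun t : nat * nat * bool => (t.1.2 == w) && t.2) P.

Definition painter_colour (a v : nat) (P : board) : bool := red_indeg v P < a.-1.

Definition painter_invariant (a : nat) (P : board) : Prop :=
  (forall w, red_indeg w P <= a.-1) /\
  (forall u y, (u, y, false) \in P -> a.-1 <= red_indeg y P).

Lemma red_indeg_cons w u v c P :
  red_indeg w ((u, v, c) :: P) = ((v == w) && c) + red_indeg w P.
Proof. by []. Qed.

Lemma red_indeg_lt_indeg u y P : (u, y, false) \in P -> red_indeg y P < indeg y P.
Proof.
elim: P => //= -[[u' y'] c] P IH; rewrite inE => /orP[/eqP[_ -> <-]|/IH] /=.
  by rewrite eqxx ltnS; apply: sub_count => t /andP[].
by case: (y' == y); case: c => /=; lia.
Qed.

Lemma painter_invariant_nil a : painter_invariant a [::].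
Proof. by []. Qed.

Lemma painter_invariant_cons a u v P :
  painter_invariant a P -> painter_invariant a ((u, v, painter_colour a v P) :: P).
Proof.
rewrite /painter_colour => -[red_le blue_ge]; split=> [w|u' y].
  rewrite red_indeg_cons; case: eqVneq => [<-|_] /=; last exact: red_le.
  by have := red_le v; case: ltnP => /=; lia.
rewrite inE red_indeg_cons => /orP[/eqP[_ -> /esym/negbT]|/blue_ge]; lia.
Qed.

Lemma incr_ord_inj n (f : 'I_n -> nat) :
  (forall i j : 'I_n, i < j -> f i < f j) -> injective f.
Proof.
move=> f_incr i j fij.
by case: (ltngtP i j) => [/f_incr|/f_incr|/val_inj //]; rewrite fij ltnn.
Qed.

Lemma uniq_size_mul_leq (T : Type) (h : T -> nat) (W : seq nat) (P : seq T) a :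
  uniq W -> (forall w, w \in W -> a <= count (fun t => h t == w) P) ->
  size W * a <= size P.
Proof.
elim: W P => [//|w W IH] P /= /andP[wW uW] countW.
rewrite -(count_predC (fun t => h t == w) P) mulSn.
apply: leq_add; first by apply: countW; rewrite mem_head.
rewrite -size_filter; apply: IH => // w' w'W; rewrite count_filter.
rewrite (@eq_count _ _ (fun t => h t == w')); first by apply: countW; rewrite inE w'W orbT.
by move=> t /=; case: eqP => //= ->; apply/eqP => w'w; rewrite -w'w w'W in wW.
Qed.

Lemma ldeg_le_red_indeg n (e : rel 'I_n) P (f : 'I_n -> nat) :
  (forall i j : 'I_n, i < j -> f i < f j) ->
  (forall i j : 'I_n, i < j -> e i j -> (f i, f j, true) \in P) ->
  forall v, ldeg e v <= red_indeg (f v) P.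
Proof.
move=> f_incr f_edge v.
rewrite /ldeg /red_indeg -size_filter cardE -(size_map (fun u => (f u, f v, true))).
apply: uniq_leq_size.
  rewrite map_inj_uniq ?enum_uniq // => x y [] /(incr_ord_inj f_incr) //.
move=> t /mapP[u]; rewrite mem_enum inE => /andP[uv euv] ->.
by rewrite mem_filter /= eqxx; apply: f_edge.
Qed.

Lemma no_red_copy n (e : rel 'I_n) P :
  0 < Delta_minus e -> (forall w, red_indeg w P <= (Delta_minus e).-1) ->
  ~ has_copy e true P.
Proof.
move=> a_gt0 red_le [f [f_incr f_edge]].
suff : Delta_minus e <= (Delta_minus e).-1 by lia.
apply/bigmax_leqP => v _.
exact: leq_trans (ldeg_le_red_indeg f_incr f_edge v) (red_le _).
Qed.

Lemma blue_copy_size n (e : rel 'I_n) P a :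
  has_copy e false P -> (forall u y, (u, y, false) \in P -> a.-1 <= red_indeg y P) ->
  Delta_plus e * a <= size P.
Proof.
move=> [f [f_incr f_edge]] blue_ge.
have [->|a_gt0] := posnP a; first by rewrite muln0.
rewrite -leq_divRL //; apply/bigmax_leqP => x _; rewrite leq_divRL //.
have -> : rdeg e x = size (map f (enum [set y : 'I_n | (x < y) && e x y])).
  by rewrite size_map /rdeg cardE.
apply: (@uniq_size_mul_leq _ (fun t : nat * nat * bool => t.1.2)).
  by rewrite map_inj_uniq ?enum_uniq //; apply: incr_ord_inj.
move=> w /mapP[y]; rewrite mem_enum inE => /andP[xy exy] ->.
have blue_xy := f_edge _ _ xy exy.
have := red_indeg_lt_indeg blue_xy; have := blue_ge _ _ blue_xy.
rewrite /indeg; lia.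
Qed.

Lemma painter_delays n1 (e1 : rel 'I_n1) n2 (e2 : rel 'I_n2) k P :
  0 < Delta_minus e1 -> builder_wins_within e1 e2 k P ->
  painter_invariant (Delta_minus e1) P ->
  Delta_plus e2 * Delta_minus e1 <= k + size P.
Proof.
move=> a_gt0; elim=> {k P} [k P [red|blue] [red_le blue_ge] | k P u v _ _ _ IH inv].
- by case: (no_red_copy a_gt0 red_le red).
- exact: leq_trans (blue_copy_size blue blue_ge) (leq_addl _ _).
- by rewrite addSnnS; apply: (IH (painter_colour _ v P)); apply: painter_invariant_cons.
Qed.

Lemma minn_mul_pred_leq a b : minn (a * a.-1) (b * b.-1) <= b * a.
Proof.
rewrite geq_min; case: (leqP a b) => [ab|/ltnW ba]; apply/orP.
  by left; rewrite mulnC leq_mul // (leq_trans (leq_pred a)).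
by right; rewrite leq_mul // (leq_trans (leq_pred b)).
Qed.

Theorem theorem3 (n1 : nat) (e1 : rel 'I_n1) (n2 : nat) (e2 : rel 'I_n2) :
  simple_graph e1 -> simple_graph e2 ->
  forall k : nat, builder_wins_within e1 e2 k [::] ->
  minn (Delta_minus e1 * (Delta_minus e1).-1)
       (Delta_plus e2 * (Delta_plus e2).-1) <= 4 * k.
Proof.
move=> _ _ k wins.
have [->|a_gt0] := posnP (Delta_minus e1); first by rewrite mul0n min0n.
have := painter_delays a_gt0 wins (painter_invariant_nil _).
rewrite addn0 => ab_le_k.
by rewrite (leq_trans (minn_mul_pred_leq _ _)) // (leq_trans ab_le_k) // leq_pmull.
Qed.
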